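(* Let $(X,\tau)$ be a topological accessibility space. Then: (a) if $\tau$ is sequential, it is Fréchet; (b) if $\tau$ has countable $\mathrm{S}_0$-character (i.e., a weak base $(\mathcal{B}_x)_{x\in X}$ with each $\mathcal{B}_x$ countable), then $\tau$ has countable character (is first-countable); (c) if $\tau$ is symmetrizable, then it is semi-metrizable.
   Context: A topological space $(X,\tau)$ is an accessibility space if for each $x_0\in X$ and every $H\subset X$ with $x_0\in\mathrm{cl}(H\setminus\{x_0\})$, there is a closed set $F$ with $x_0\in\mathrm{cl}(F\setminus\{x_0\})$ and $x_0\notin\mathrm{cl}(F\setminus H\setminus\{x_0\})$. Sequential: every sequentially closed set (containing all limits of sequences in it) is closed. Fréchet: whenever $x\in\mathrm{cl}A$, some sequence in $A$ converges to $x$. A weak base is a family $(\mathcal{B}_x)_{x\in X}$ of filter-bases with $x\in\bigcap\mathcal{B}_x$ such that $U$ is open iff for every $x\in U$ some $V\in\mathcal{B}_x$ satisfies $V\subset U$. A semi-metric is $d:X\times X\to[0,\infty)$ symmetric with $d(x,y)=0\iff x=y$, with balls $B(x,\epsilon)=\{y:d(x,y)<\epsilon\}$. $\tau$ is symmetrizable if for some semi-metric $d$, $O$ is open iff for every $x\in O$ some $B(x,\epsilon)\subset O$; $\tau$ is semi-metrizable if for some semi-metric $d$, $x\in\mathrm{cl}A\iff\inf_{a\in A}d(x,a)=0$ for all $x,A$. *)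

From Stdlib Require Import Reals.
Open Scope R_scope.

Definition set (X : Type) := X -> Prop.

Record topology (X : Type) := Topology {
  open : set X -> Prop;
  open_full : open (fun _ => True);
  open_inter : forall U V, open U -> open V -> open (fun x => U x /\ V x);
  open_union : forall F : set (set X),
      (forall U, F U -> open U) -> open (fun x => exists U, F U /\ U x)
}.
Arguments open {X} t U.

Section Topo.
Context {X : Type} (T : topology X).

Definition closed (F : set X) : Prop := open T (fun x => ~ F x).

Definition cl (A : set X) (x : X) : Prop :=
  forall U, open T U -> U x -> exists y, U y /\ A y.

Definition minus (A B : set X) : set X := fun y => A y /\ ~ B y.
Definition minus_pt (A : set X) (x0 : X) : set X := fun y => A y /\ y <> x0.

Definition accessibility_space : Prop :=
  forall (x0 : X) (H : set X),
    cl (minus_pt H x0) x0 ->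
    exists F : set X, closed F /\ cl (minus_pt F x0) x0 /\
                      ~ cl (minus_pt (minus F H) x0) x0.

Definition converges (s : nat -> X) (x : X) : Prop :=
  forall U, open T U -> U x -> exists N : nat, forall n, (N <= n)%nat -> U (s n).

Definition seq_closed (A : set X) : Prop :=
  forall (s : nat -> X) (x : X), (forall n, A (s n)) -> converges s x -> A x.

Definition sequential : Prop := forall A, seq_closed A -> closed A.

Definition frechet : Prop :=
  forall (A : set X) (x : X), cl A x ->
    exists s : nat -> X, (forall n, A (s n)) /\ converges s x.

Definition included (A B : set X) : Prop := forall y, A y -> B y.

Definition filter_base (B : set (set X)) : Prop :=
  (exists V, B V) /\
  (forall V1 V2, B V1 -> B V2 ->
     exists V3, B V3 /\ included V3 (fun y => V1 y /\ V2 y)).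

Definition weak_base (B : X -> set (set X)) : Prop :=
  (forall x, filter_base (B x)) /\
  (forall x V, B x V -> V x) /\
  (forall U : set X, open T U <->
     (forall x, U x -> exists V, B x V /\ included V U)).

(* a family of sets is countable: it admits a surjection from nat
   (our families are nonempty filter bases, so this covers finite ones) *)
Definition countable_family (F : set (set X)) : Prop :=
  exists e : nat -> set X, forall V, F V -> exists n, e n = V.

Definition countable_S0_character : Prop :=
  exists B : X -> set (set X), weak_base B /\ forall x, countable_family (B x).

Definition first_countable : Prop :=
  forall x : X, exists e : nat -> set X,
    (forall n, open T (e n) /\ e n x) /\
    (forall U, open T U -> U x -> exists n, included (e n) U).

Definition semi_metric (d : X -> X -> R) : Prop :=
  (forall x y, 0 <= d x y) /\
  (forall x y, d x y = d y x) /\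
  (forall x y, d x y = 0 <-> x = y).

Definition ball (d : X -> X -> R) (x : X) (eps : R) : set X :=
  fun y => d x y < eps.

Definition symmetrizable : Prop :=
  exists d, semi_metric d /\
    forall O : set X, open T O <->
      (forall x, O x -> exists eps, 0 < eps /\ included (ball d x eps) O).

(* inf_{a in A} d(x,a) = 0 (with inf of the empty set = +infinity), unfolded:
   for every eps > 0 there is a in A with d x a < eps *)
Definition inf_dist_zero (d : X -> X -> R) (x : X) (A : set X) : Prop :=
  forall eps, 0 < eps -> exists a, A a /\ d x a < eps.

Definition semi_metrizable : Prop :=
  exists d, semi_metric d /\
    forall (x : X) (A : set X), cl A x <-> inf_dist_zero d x A.

End Topo.

(* Given x0 ∈ cl(H \ {x0}), accessibility provides a closed F with x0 ∈ cl(F \ {x0}) and an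
   open W ∋ x0 with W ∩ F \ {x0} ⊆ H.  The set F \ {x0} is not closed, and each hypothesis of
   the corollary makes this failure visible close to x0 inside H:
   (a) sequentiality yields a sequence in F \ {x0} converging to x0, whose tail lies in W, hence
       in H;
   (b), (c) if some member V of a weak base at x0 were not a neighbourhood of x0, take H := X \ V:
       then V ∩ W contains a weak-base member at x0 missing F \ {x0}, which makes the complement
       of F \ {x0} open, contradicting x0 ∈ cl(F \ {x0}).  So weak-base members are
       neighbourhoods; for (b) their interiors form a countable local base, and for (c) the
       balls of the symmetric form a weak base, so they are neighbourhoods and d semi-metrizes. *)
From Pilot Require Import Defs.
From Stdlib Require Import Reals Classical Lia Lra.
Import Defs.

Section Accessibility.
Context {X : Type} (T : topology X).

Definition interior (V : set X) : set X :=
  fun y => exists O, (open T O /\ included O V) /\ O y.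

Lemma open_interior (V : set X) : open T (interior V).
Proof.
  apply open_union; intros O [HO _]; exact HO.
Qed.

Lemma closed_cl (F : set X) (y : X) : closed T F -> cl T F y -> F y.
Proof.
  intros HF Hcl. apply NNPP; intro nFy.
  destruct (Hcl _ HF nFy) as [z [nFz Fz]]. contradiction.
Qed.

Lemma not_cl_open (B : set X) (x : X) :
  ~ cl T B x -> exists W, open T W /\ W x /\ forall y, W y -> ~ B y.
Proof.
  intro nBx. apply NNPP; intro Hn; apply nBx; intros W HW Wx.
  apply NNPP; intro Hne; apply Hn; exists W; repeat split; auto.
  intros y Wy By; apply Hne; exists y; auto.
Qed.

Lemma cl_minus_pt (A : set X) (x : X) : cl T A x -> ~ A x -> cl T (minus_pt A x) x.
Proof.
  intros Hcl nAx U HU Ux; destruct (Hcl U HU Ux) as [y [Uy Ay]].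
  exists y; repeat split; auto; intros ->; contradiction.
Qed.

Lemma not_cl_punctured_self (F : set X) (x : X) :
  open T (fun y => ~ minus_pt F x y) -> ~ cl T (minus_pt F x) x.
Proof.
  intros HU Hcl. destruct (Hcl _ HU) as [y [nFy Fy]]; [now intros [_ nxx] | contradiction].
Qed.

Lemma converges_cl (A : set X) (s : nat -> X) (y : X) :
  (forall n, A (s n)) -> converges T s y -> cl T A y.
Proof.
  intros As Hs U HU Uy. destruct (Hs U HU Uy) as [N HN].
  exists (s N); split; [apply HN; lia | apply As].
Qed.

Lemma converges_shift (s : nat -> X) (x : X) (N : nat) :
  converges T s x -> converges T (fun n => s (N + n)%nat) x.
Proof.
  intros Hs U HU Ux. destruct (Hs U HU Ux) as [M HM].
  exists M; intros n Hn; apply HM; lia.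
Qed.

Lemma sequential_cl_punctured_seq (F : set X) (x : X) :
  sequential T -> closed T F -> cl T (minus_pt F x) x ->
  exists s, (forall n, minus_pt F x (s n)) /\ converges T s x.
Proof.
  intros Hseq HF Hcl.
  assert (Hns : ~ seq_closed T (minus_pt F x)).
  { intro Hsc. destruct (closed_cl _ x (Hseq _ Hsc) Hcl) as [_ nxx]. now apply nxx. }
  apply not_all_ex_not in Hns as [s Hs]; apply not_all_ex_not in Hs as [y Hs].
  apply imply_to_and in Hs as [Fs Hs]; apply imply_to_and in Hs as [Hconv nFy].
  assert (Fy : F y).
  { apply (closed_cl _ _ HF), (converges_cl _ s); auto. intro n; apply Fs. }
  assert (y = x) as -> by (apply NNPP; intro; apply nFy; split; auto).
  exists s; auto.
Qed.

Lemma accessibility_sequential_frechet :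
  accessibility_space T -> sequential T -> frechet T.
Proof.
  intros Hacc Hseq A x Hcl.
  destruct (classic (A x)) as [Ax | nAx].
  { exists (fun _ => x); split; auto. intros U _ Ux; exists 0%nat; auto. }
  destruct (Hacc x A (cl_minus_pt A x Hcl nAx)) as [F [HF [HFx HFAx]]].
  destruct (sequential_cl_punctured_seq F x Hseq HF HFx) as [s [Fs Hs]].
  destruct (not_cl_open _ _ HFAx) as [W [HW [Wx HWn]]].
  destruct (Hs W HW Wx) as [N HN].
  exists (fun n => s (N + n)%nat); split; [|now apply converges_shift].
  intro n. apply NNPP; intro nA. destruct (Fs (N + n)%nat) as [Fsn nxsn].
  apply (HWn (s (N + n)%nat)); [apply HN; lia | repeat split; auto].
Qed.

Lemma accessibility_weak_base_interior (B : X -> set (set X)) (x : X) (V : set X) :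
  accessibility_space T -> weak_base T B -> B x V -> interior V x.
Proof.
  intros Hacc [Hfb [Hmem Hopen]] BV. apply NNPP; intro nIV.
  assert (Hcl : cl T (minus_pt (fun y => ~ V y) x) x).
  { intros U HU Ux. apply NNPP; intro Hne; apply nIV; exists U; repeat split; auto.
    intros y Uy; apply NNPP; intro nVy; apply Hne; exists y; repeat split; auto.
    intros ->; apply nVy, Hmem, BV. }
  destruct (Hacc x _ Hcl) as [F [HF [HFx HFVx]]].
  destruct (not_cl_open _ _ HFVx) as [W [HW [Wx HWn]]].
  apply (not_cl_punctured_self F x); auto.
  apply Hopen; intros y Uy. destruct (classic (y = x)) as [-> | nyx].
  - destruct (proj1 (Hopen W) HW x Wx) as [V1 [BV1 V1W]].
    destruct (proj2 (Hfb x) V1 V BV1 BV) as [V3 [BV3 V3i]].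
    exists V3; split; auto. intros z V3z [Fz nzx]. destruct (V3i z V3z) as [V1z Vz].
    apply (HWn z (V1W z V1z)); repeat split; auto.
  - assert (nFy : ~ F y) by (intro; apply Uy; split; auto).
    destruct (proj1 (Hopen _) HF y nFy) as [V' [BV' V'nF]].
    exists V'; split; auto. intros z V'z [Fz _]. exact (V'nF z V'z Fz).
Qed.

Lemma interior_weak_base_first_countable (B : X -> set (set X)) :
  weak_base T B -> (forall x V, B x V -> interior V x) ->
  (forall x, countable_family (B x)) -> first_countable T.
Proof.
  intros [_ [_ Hopen]] Hint Hcnt x. destruct (Hcnt x) as [E HE].
  (* the implication replaces the enumerated sets outside B x by the whole space *)
  exists (fun n => interior (fun y => B x (E n) -> E n y)); split.
  - intro n; split; [apply open_interior|].
    destruct (classic (B x (E n))) as [BE | nBE].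
    + destruct (Hint x _ BE) as [O [[HO OE] Ox]].
      exists O; repeat split; auto. intros y Oy _; auto.
    + exists (fun _ => True); repeat split; [apply open_full | intros y _ BE; contradiction].
  - intros U HU Ux. destruct (proj1 (Hopen U) HU x Ux) as [V [BV VU]].
    destruct (HE V BV) as [n <-]. exists n.
    intros y [O [[_ OE] Oy]]. exact (VU y (OE y Oy BV)).
Qed.

Definition balls (d : X -> X -> R) (x : X) : set (set X) :=
  fun V => exists eps, 0 < eps /\ V = ball d x eps.

Lemma symmetrizable_balls_weak_base (d : X -> X -> R) :
  semi_metric d ->
  (forall O, open T O <-> forall x, O x -> exists eps, 0 < eps /\ included (ball d x eps) O) ->
  weak_base T (balls d).
Proof.
  intros [_ [_ Hd0]] Hop. split; [|split].
  - intro x; split; [exists (ball d x 1), 1; split; auto; lra|].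
    intros V1 V2 [e1 [He1 ->]] [e2 [He2 ->]].
    exists (ball d x (Rmin e1 e2)); split; [exists (Rmin e1 e2); split; auto; now apply Rmin_pos|].
    intros y Hy; unfold ball in *; split;
      [apply (Rlt_le_trans _ _ _ Hy (Rmin_l _ _)) | apply (Rlt_le_trans _ _ _ Hy (Rmin_r _ _))].
  - intros x V [eps [Heps ->]]. unfold ball. now rewrite (proj2 (Hd0 x x) eq_refl).
  - intro U; rewrite Hop; split.
    + intros HU x Ux. destruct (HU x Ux) as [eps [Heps Hb]].
      exists (ball d x eps); split; auto. exists eps; auto.
    + intros HU x Ux. destruct (HU x Ux) as [V [[eps [Heps ->]] Hb]]. exists eps; auto.
Qed.

Lemma accessibility_symmetrizable_semi_metrizable :
  accessibility_space T -> symmetrizable T -> semi_metrizable T.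
Proof.
  intros Hacc [d [Hsm Hop]]. exists d; split; auto. intros x A; split.
  - intros Hcl eps Heps.
    destruct (accessibility_weak_base_interior (balls d) x (ball d x eps) Hacc
                (symmetrizable_balls_weak_base d Hsm Hop) (ex_intro _ eps (conj Heps eq_refl)))
      as [O [[HO Ob] Ox]].
    destruct (Hcl O HO Ox) as [a [Oa Aa]]. exists a; split; auto. apply Ob, Oa.
  - intros Hinf U HU Ux. destruct (proj1 (Hop U) HU x Ux) as [eps [Heps Hb]].
    destruct (Hinf eps Heps) as [a [Aa Ha]]. exists a; auto.
Qed.

End Accessibility.

Theorem corollary4p3 (X : Type) (T : topology X) :
  accessibility_space T ->
  (sequential T -> frechet T) /\
  (countable_S0_character T -> first_countable T) /\
  (symmetrizable T -> semi_metrizable T).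
Proof.
  intro Hacc. split; [|split].
  - now apply accessibility_sequential_frechet.
  - intros [B [HB Hcnt]]. apply (interior_weak_base_first_countable T B HB); auto.
    intros x V BV. exact (accessibility_weak_base_interior T B x V Hacc HB BV).
  - now apply accessibility_symmetrizable_semi_metrizable.
Qed.
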